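(* Let $n$ be an even positive integer. Then $C_{1/6}(\mathrm{1v2Cycle})\ge\frac n4$, where $\mathrm{1v2Cycle}$ is on $n$ vertices.
   Context: Graphs on vertex set $\{1,\dots,n\}$ are encoded as $x\in\{0,1\}^N$, $N=\binom n2$, one bit per unordered pair indicating presence of the edge. $\mathrm{1v2Cycle}:\Delta\to\{0,1\}$ is defined on the set $\Delta$ of graphs that are either a single cycle of length $n$ (value $1$) or a disjoint union of two cycles each of length $n/2$ (value $0$). For a partial $g:\Delta\to\{0,1\}$, the canonical distribution $\mathcal{D}_g$ on $\Delta$ outputs with probability $1/2$ a uniform element of $g^{-1}(1)$ and with probability $1/2$ a uniform element of $g^{-1}(0)$. A certificate of $f:\Delta\to\{0,1\}$ on $x\in\Delta$ is a set $C\subseteq\{1,\dots,N\}$ such that every $y\in\Delta$ with $y|_C=x|_C$ has $f(y)=f(x)$; $C(f)=\max_{x\in\Delta}\min\{|C|:C\text{ certificate on }x\}$. The $\delta$-approximate certificate complexity is $C_\delta(g)=\min\{C(f): f:\Delta\to\{0,1\},\ \Pr_{x\sim\mathcal{D}_g}[f(x)\ne g(x)]\le\delta\}$. *)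

From mathcomp Require Import all_boot all_order all_algebra.
Set Implicit Arguments. Unset Strict Implicit. Unset Printing Implicit Defensive.
Import Order.TTheory GRing.Theory Num.Theory.

(* Inputs are x : {ffun I -> bool}, I a finite coordinate type;
   a partial function is given by its domain Dom and a total function
   whose values outside Dom are irrelevant. *)

Section Generic.
Variable I : finType.
Notation input := {ffun I -> bool}.

Definition is_cert (Dom : {set input}) (f : input -> bool) (x : input)
  (C : {set I}) : bool :=
  [forall y in Dom, [forall i in C, y i == x i] ==> (f y == f x)].

(* min{|C| : C certificate on x}; the full coordinate set is always a
   certificate, so the neutral element #|I| does not affect the min. *)
Definition cert_min (Dom : {set input}) (f : input -> bool) (x : input) : nat :=
  \big[minn/#|I|]_(C : {set I} | is_cert Dom f x C) #|C|.

Definition cert_complexity (Dom : {set input}) (f : input -> bool) : nat :=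
  \max_(x in Dom) cert_min Dom f x.

(* Pr_{x ~ D_g}[f x <> g x], D_g the canonical (balanced) distribution. *)
Local Open Scope ring_scope.
Definition canon_err (Dom : {set input}) (g f : input -> bool) : rat :=
  ((1 / 2)%R : rat) * ((#|[set x in Dom | g x && ~~ f x]|)%:R
              / (#|[set x in Dom | g x]|)%:R)
  + ((1 / 2)%R : rat) * ((#|[set x in Dom | ~~ g x && f x]|)%:R
              / (#|[set x in Dom | ~~ g x]|)%:R).

(* C_delta(g) = min { C(f) : Pr_{D_g}[f <> g] <= delta }.
   (g itself is feasible, and C(f) <= #|I|, so #|I| is a harmless neutral.) *)
Definition approx_cert (Dom : {set input}) (g : input -> bool) (delta : rat)
  : nat :=
  \big[minn/#|I|]_(f : {ffun input -> bool} | (canon_err Dom g f <= delta)%R)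
     cert_complexity Dom f.
Local Close Scope ring_scope.
End Generic.

Definition Pair (n : nat) := {A : {set 'I_n} | #|A| == 2}.
Definition Graph (n : nat) := {ffun Pair n -> bool}.

Definition cyc_has (n : nat) (s : seq 'I_n) (e : Pair n) : bool :=
  has (fun v => val e == [set v; next s v]) s.

Definition single_cycle (n : nat) (x : Graph n) : bool :=
  [exists s : n.-tuple 'I_n,
     [&& uniq s, 3 <= n & [forall e, x e == cyc_has s e]]].

Definition two_cycles (n : nat) (x : Graph n) : bool :=
  [exists s1 : (n./2).-tuple 'I_n, exists s2 : (n./2).-tuple 'I_n,
     [&& uniq (val s1 ++ val s2), 3 <= n./2 &
         [forall e, x e == cyc_has s1 e || cyc_has s2 e]]].

Definition Delta (n : nat) : {set Graph n} :=
  [set x | single_cycle x || two_cycles x].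
Definition oneVtwoCycle (n : nat) (x : Graph n) : bool := single_cycle x.

From mathcomp Require Import all_boot all_order all_algebra all_fingroup zify lra.
Import Order.TTheory GRing.Theory Num.Theory.
Set Implicit Arguments. Unset Strict Implicit. Unset Printing Implicit Defensive.

(* Label the vertices by a permutation s of 'I_n: s yields the Hamiltonian cycle
   s 0, ..., s (n-1) and, with m = n/2, the two cycles s 0, ..., s (m-1) and
   s m, ..., s (n-1).  Both labellings push the uniform permutation forward to the
   uniform distribution on the corresponding half of Delta, so the error of f is
   (r + q)/2 with r = Pr_s[f rejects the cycle of s] and q = Pr_s[f accepts the
   two cycles of s].
   Rotating the labels by i < m does not change the Hamiltonian cycle, while the
   two-cycle graph of the rotated labelling is that cycle cut at the antipodal
   positions i-1, i and i+m-1, i+m.  It differs from the cycle only on pairs with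
   labels a, b such that a + 1 = b = i (mod m), and when m > 2 no pair is cut for
   two different i.  Hence a certificate of size k on an accepted cycle still holds
   on at least m - k of these m two-cycle graphs, which f must then accept:
   q >= (1 - r)(m - k)/m.  For k < n/4 = m/2 this gives q > (1 - r)/2,
   contradicting r + q <= 1/3. *)

Lemma next_iota a b x : a <= x < a + b ->
  next (iota a b) x = if x.+1 == a + b then a else x.+1.
Proof.
move=> /andP[a_le_x x_lt]; have x_in : x \in iota a b by rewrite mem_iota a_le_x.
have idx : index x (iota a b) = x - a.
  have nth_x : nth 0 (iota a b) (x - a) = x by rewrite nth_iota; lia.
  by rewrite -{1}nth_x index_uniq ?size_iota ?iota_uniq //; lia.
rewrite next_nth x_in idx; case: b x_lt {x_in idx} => [|b] x_lt /=; first by lia.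
have [lt_xb|le_bx] := ltnP (x - a) b.
  by rewrite nth_iota //; case: eqP; lia.
by rewrite nth_default ?size_iota //; case: eqP; lia.
Qed.

Section Certificates.
Variables (I : finType) (Dom : {set {ffun I -> bool}}) (f : {ffun I -> bool} -> bool).

Lemma cert_min_attained x : exists2 C, is_cert Dom f x C & #|C| <= cert_min Dom f x.
Proof.
rewrite /cert_min; elim/big_ind: _ => [|a b [C1 h1 l1] [C2 h2 l2]|C hC].
- exists [set: I]; rewrite ?cardsT //; apply/forall_inP => y _; apply/implyP => agree.
  suff -> : y = x by [].
  by apply/ffunP => i; apply/eqP; move/forall_inP: agree; apply; rewrite inE.
- by case: (leqP a b) => ab; [exists C1 | exists C2; rewrite // ltnW].
- by exists C.
Qed.

Lemma cert_complexity_bound x : x \in Dom ->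
  exists2 C, is_cert Dom f x C & #|C| <= cert_complexity Dom f.
Proof.
move=> xD; have [C cert le_C] := cert_min_attained x.
by exists C => //; apply: leq_trans le_C (leq_bigmax_cond x xD).
Qed.

Lemma cert_fooled (J : finType) (y : J -> {ffun I -> bool}) x C :
  is_cert Dom f x C -> (forall j, y j \in Dom) ->
  (forall i, #|[set j | y j i != x i]| <= 1) ->
  #|J| - #|C| <= #|[set j | f (y j) == f x]|.
Proof.
move=> /forall_inP cert yD sparse.
have fooled : ~: [set j | f (y j) == f x] \subset \bigcup_(i in C) [set j | y j i != x i].
  apply/subsetP => j; rewrite !inE; apply: contraR => /bigcupP agree.
  apply: (implyP (cert _ (yD j))); apply/forall_inP => i iC.
  by apply/negPn/negP => neq; apply: agree; exists i; rewrite ?inE.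
have union_bound : #|\bigcup_(i in C) [set j | y j i != x i]| <= \sum_(i in C) 1.
  elim/big_ind2: _ => [|s1 U1 s2 U2 le1 le2|i _]; rewrite ?cards0 ?sparse //.
  by rewrite (leq_trans (leq_card_setU U1 U2)) ?leq_add.
rewrite -(cardsC [set j | f (y j) == f x]) leq_subLR addnC leq_add2r.
by rewrite (leq_trans (subset_leq_card fooled)) // (leq_trans union_bound) // sum1_card.
Qed.
End Certificates.

Lemma exchange_sum_card (T1 T2 : finType) (Q : T1 -> T2 -> bool) :
  \sum_x1 #|[set x2 | Q x1 x2]| = \sum_x2 #|[set x1 | Q x1 x2]|.
Proof.
have cardE (T : finType) (P : pred T) : #|[set x | P x]| = \sum_x P x.
  by rewrite -sum1_card big_mkcond; apply: eq_bigr => x _; rewrite inE; case: (P x).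
rewrite (eq_bigr (fun x1 => \sum_x2 (Q x1 x2 : nat))) => [|x1 _]; last exact: cardE.
by rewrite exchange_big; apply: eq_bigr => x2 _; rewrite (cardE _ (Q^~ x2)).
Qed.

Section UniformImage.
Variables (gT : finGroupType) (G : finType) (F : gT -> G).
Hypothesis F_mulr : forall s s' t, F s = F s' -> F (s * t)%g = F (s' * t)%g.

Let fibre s := [set t | F t == F s].

Lemma card_fibre s : #|fibre s| = #|fibre 1|.
Proof.
suff le_fibre s1 s2 : #|fibre s1| <= #|fibre s2| by apply/eqP; rewrite eqn_leq !le_fibre.
rewrite -(card_imset _ (mulIg (s1^-1 * s2)%g)); apply/subset_leq_card/subsetP.
move=> _ /imsetP[t + ->]; rewrite !inE => /eqP/F_mulr ->.
by rewrite mulKVg.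
Qed.

Lemma card_preim_imset (A : {set G}) : A \subset F @: setT ->
  #|[set s | F s \in A]| = #|A| * #|fibre 1|.
Proof.
move=> A_im; rewrite -sum1_card (partition_big F (mem A)) => [|s]; last by rewrite inE.
rewrite -sum_nat_const; apply: eq_bigr => x xA.
have /imsetP[s _ Fs] := subsetP A_im x xA; rewrite Fs in xA *.
rewrite -(card_fibre s) -sum1_card; apply: eq_bigl => t; rewrite !inE.
by apply/andP/idP => [[] //|/eqP ->].
Qed.

Lemma imset_card_ratio (R : numFieldType) (P : pred G) :
  (#|[set x in F @: setT | P x]|%:R / #|F @: setT|%:R : R)%R
  = (#|[set s | P (F s)]|%:R / #|gT|%:R)%R.
Proof.
have cardT : #|gT| = #|F @: setT| * #|fibre 1|.
  rewrite -card_preim_imset //; apply: eq_card => s.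
  by rewrite !inE imset_f ?inE.
have preimP : [set s | P (F s)] = [set s | F s \in [set x in F @: setT | P x]].
  by apply/setP => s; rewrite !inE imset_f ?inE.
rewrite cardT preimP card_preim_imset ?subsetIl //; last first.
  by apply/subsetP => x; rewrite inE => /andP[].
have fibre_gt0 : 0 < #|fibre 1| by apply/card_gt0P; exists 1%g; rewrite inE.
by rewrite !natrM -mulf_div divff ?mulr1 // pnatr_eq0 -lt0n fibre_gt0.
Qed.
End UniformImage.

Section FunGraph.
Variable n : nat.
Hypothesis n_gt2 : 2 < n.
Implicit Types (f g : 'I_n -> 'I_n) (p q s t : {perm 'I_n}) (e : Pair n).

Definition fun_graph f p : Graph n :=
  [ffun e => [exists j, val e == [set p j; p (f j)]]].

Lemma fun_graph_neq f g p e : fun_graph f p e != fun_graph g p e ->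
  exists2 j, f j != g j & (val e == [set p j; p (f j)]) || (val e == [set p j; p (g j)]).
Proof.
rewrite !ffunE; case: existsP => [[j /eqP ej]|nf]; case: existsP => [[k /eqP ek]|ng] //= _.
  exists j; last by rewrite ej eqxx.
  by apply/eqP => fg; apply: ng; exists j; rewrite -fg ej.
exists k; last by rewrite ek eqxx orbT.
by apply/eqP => fg; apply: nf; exists k; rewrite fg ek.
Qed.

Lemma cyc_has_map (c : seq 'I_n) p e : uniq c ->
  cyc_has (map p c) e = has (fun j => val e == [set p j; p (next c j)]) c.
Proof.
move=> c_uniq; rewrite /cyc_has has_map; apply: eq_in_has => j _ /=.
by rewrite (next_map perm_inj c_uniq).
Qed.

Lemma next_enum_ord j : next (enum 'I_n) j = ordS j.
Proof.
apply: val_inj; rewrite /= -(next_map val_inj (enum_uniq _)) val_enum_ord.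
rewrite next_iota ?add0n ?ltn_ord //.
by case: eqP => [->|/eqP ne]; rewrite ?modnn // modn_small // ltn_neqAle ne ltn_ord.
Qed.

Lemma cyc_has_enum p e : cyc_has (map p (enum 'I_n)) e = fun_graph (@ordS n) p e.
Proof.
rewrite cyc_has_map ?enum_uniq // ffunE; apply/hasP/existsP => [[j _]|[j]].
  by rewrite next_enum_ord; exists j.
by exists j; rewrite ?mem_enum ?next_enum_ord.
Qed.

Lemma single_cycle_fun_graph p : single_cycle (fun_graph (@ordS n) p).
Proof.
have size_p : size (map p (enum 'I_n)) == n by rewrite size_map size_enum_ord.
apply/existsP; exists (Tuple size_p).
rewrite /= map_inj_uniq ?enum_uniq //; last exact: perm_inj.
by rewrite n_gt2; apply/forallP => e; rewrite cyc_has_enum.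
Qed.

Lemma single_cycleP x : single_cycle x -> exists p, x = fun_graph (@ordS n) p.
Proof.
case/existsP => t /and3P[t_uniq _ /forallP xE].
have t_inj : injective (tnth t) by apply/tuple_uniqP.
exists (perm t_inj); apply/ffunP => e; rewrite (eqP (xE e)) -cyc_has_enum.
by congr cyc_has; rewrite -{1}(map_tnth_enum t); apply: eq_map => j; rewrite permE.
Qed.

Definition rotation : {perm 'I_n} := perm (@ordS_inj n).

Lemma rotationX i j : val ((rotation ^+ i)%g j) = (j + i) %% n.
Proof.
elim: i => [|i IHi]; first by rewrite expg0 perm1 addn0 modn_small.
by rewrite expgSr permM permE /= IHi -addn1 modnDml addn1 addnS.
Qed.

Lemma rotationX_ordS i j : (rotation ^+ i)%g (ordS j) = ordS ((rotation ^+ i)%g j).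
Proof. by rewrite -!(permE (@ordS_inj n)) -!permM -expgS -expgSr. Qed.

Lemma fun_graph_rotation i s :
  fun_graph (@ordS n) (rotation ^+ i * s)%g = fun_graph (@ordS n) s.
Proof.
apply/ffunP => e; rewrite !ffunE; apply/existsP/existsP => [[j]|[j]].
  by rewrite !permM rotationX_ordS; exists ((rotation ^+ i)%g j).
by exists ((rotation ^+ i)^-1 j)%g; rewrite !permM rotationX_ordS permKV.
Qed.

Lemma rotationX_transitive j k : exists i, (rotation ^+ i)%g j = k.
Proof.
exists (k + (n - j)); apply: val_inj; rewrite rotationX addnA addnC addnA.
by rewrite subnK ?(ltnW (ltn_ord j)) // modnDl modn_small.
Qed.

Lemma ordS_closed (B : {set 'I_n}) : (forall j, (ordS j \in B) = (j \in B)) ->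
  forall j k, (j \in B) = (k \in B).
Proof.
move=> B_ordS j k; have [i <-] := rotationX_transitive j k.
elim: i => [|i IHi]; first by rewrite expg0 perm1.
by rewrite expgSr permM permE B_ordS.
Qed.

Lemma ordS_neq (j : 'I_n) : ordS j != j.
Proof.
apply/eqP => /(congr1 val) /=; have := ltn_ord j; rewrite leq_eqVlt.
by case/orP => [/eqP jn|/modn_small ->]; rewrite ?jn ?modnn; lia.
Qed.

Lemma fun_graph_neq_cycle f p q (A : {set 'I_n}) a a' :
  {mono f : j / j \in A} -> a \in A -> a' \notin A ->
  fun_graph f p != fun_graph (@ordS n) q.
Proof.
move=> f_A aA a'A; apply/eqP => E.
pose B := [set j | (p^-1)%g (q j) \in A].
suff : ((q^-1)%g (p a) \in B) = ((q^-1)%g (p a') \in B).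
  by rewrite !inE !permKV !permK aA (negbTE a'A).
apply: ordS_closed => j.
have edge : #|[set q j; q (ordS j)]| == 2.
  by rewrite cards2 (inj_eq perm_inj) [_ == ordS j]eq_sym ordS_neq.
have : fun_graph (@ordS n) q (Sub [set q j; q (ordS j)] edge : Pair n).
  by rewrite ffunE; apply/existsP; exists j.
rewrite -E ffunE => /existsP[b /eqP /= qj_E].
have side y : y \in [set q j; q (ordS j)] -> ((p^-1)%g y \in A) = (b \in A).
  by rewrite qj_E => /set2P[] ->; rewrite permK ?f_A.
by rewrite !inE !side ?set21 ?set22.
Qed.

Lemma fun_graph_mulr f s t e (e_t : #|(t^-1)%g @: val e| == 2) :
  fun_graph f (s * t)%g e = fun_graph f s (Sub ((t^-1)%g @: val e) e_t : Pair n).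
Proof.
rewrite !ffunE; apply: eq_existsb => j; rewrite /= !permM.
rewrite -(inj_eq (imset_inj (@perm_inj _ (t^-1)%g))) imsetU1 imset_set1.
by rewrite -!permM mulgV mulg1.
Qed.

Lemma fun_graph_mulr_compat f s s' t :
  fun_graph f s = fun_graph f s' -> fun_graph f (s * t)%g = fun_graph f (s' * t)%g.
Proof.
move=> E; apply/ffunP => e.
have e_t : #|(t^-1)%g @: val e| == 2 by rewrite card_imset ?(valP e) //; exact: perm_inj.
by rewrite !(fun_graph_mulr _ _ e_t) E.
Qed.
End FunGraph.

Section Halves.
Variable n : nat.
Local Notation m := n./2.
Hypotheses (n_double : n = m + m) (m_gt2 : 2 < m).
Implicit Types (p q s : {perm 'I_n}) (j : 'I_n) (e : Pair n).

Let n_gt2 : 2 < n. Proof. lia. Qed.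

Definition half_succ j : 'I_n :=
  if j < m then next (take m (enum 'I_n)) j else next (drop m (enum 'I_n)) j.

Lemma map_val_take_enum : map val (take m (enum 'I_n)) = iota 0 m.
Proof. by rewrite map_take val_enum_ord take_iota; congr iota; lia. Qed.

Lemma map_val_drop_enum : map val (drop m (enum 'I_n)) = iota m m.
Proof. by rewrite map_drop val_enum_ord drop_iota; congr iota; lia. Qed.

Lemma val_half_succ j : val (half_succ j) =
  if j < m then (if j.+1 == m then 0 else j.+1) else (if j.+1 == n then m else j.+1).
Proof.
have j_lt := ltn_ord j; rewrite /half_succ; case: ifP => j_m.
  by rewrite -(next_map val_inj (take_uniq _ (enum_uniq _))) map_val_take_enum next_iota.
rewrite -(next_map val_inj (drop_uniq _ (enum_uniq _))) map_val_drop_enum next_iota.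
  by rewrite -n_double.
by rewrite -n_double j_lt leqNgt j_m.
Qed.

Lemma half_succ_lt j : (half_succ j < m) = (j < m).
Proof. by rewrite val_half_succ; have := ltn_ord j; do 2?case: ifP; lia. Qed.

Lemma mem_take_enum j : (j \in take m (enum 'I_n)) = (j < m).
Proof. by rewrite -(mem_map val_inj) map_val_take_enum mem_iota. Qed.

Lemma mem_drop_enum j : (j \in drop m (enum 'I_n)) = (m <= j).
Proof.
by rewrite -(mem_map val_inj) map_val_drop_enum mem_iota -n_double ltn_ord andbT.
Qed.

Lemma fun_graph_half p e : fun_graph half_succ p e =
  cyc_has (map p (take m (enum 'I_n))) e || cyc_has (map p (drop m (enum 'I_n))) e.
Proof.
rewrite ffunE !cyc_has_map ?take_uniq ?drop_uniq ?enum_uniq //.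
apply/existsP/orP => [[j ej]|[]/hasP[j j_in ej]]; last 2 first.
- by exists j; move: j_in ej; rewrite mem_take_enum /half_succ => ->.
- by exists j; move: j_in ej; rewrite mem_drop_enum /half_succ leqNgt => /negbTE ->.
case: (ltnP j m) => j_m; [left | right]; apply/hasP; exists j;
  rewrite ?mem_take_enum ?mem_drop_enum //.
  by move: ej; rewrite /half_succ j_m.
by move: ej; rewrite /half_succ ltnNge j_m.
Qed.

Lemma two_cycles_fun_graph p : two_cycles (fun_graph half_succ p).
Proof.
have size_l : size (map p (take m (enum 'I_n))) == m.
  by rewrite size_map size_takel // size_enum_ord; lia.
have size_r : size (map p (drop m (enum 'I_n))) == m.
  by rewrite size_map size_drop size_enum_ord; apply/eqP; lia.
apply/existsP; exists (Tuple size_l); apply/existsP; exists (Tuple size_r).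
rewrite /= -map_cat cat_take_drop map_inj_uniq ?enum_uniq //; last exact: perm_inj.
by rewrite m_gt2; apply/forallP => e; rewrite fun_graph_half.
Qed.

Lemma two_cyclesP x : two_cycles x -> exists p, x = fun_graph half_succ p.
Proof.
case/existsP => t1 /existsP[t2 /and3P[t_uniq _ /forallP xE]].
have size_t : size (val t1 ++ val t2) == n by rewrite size_cat !size_tuple; apply/eqP.
have t_inj : injective (tnth (Tuple size_t)) by apply/tuple_uniqP.
have t_enum : map (perm t_inj) (enum 'I_n) = val t1 ++ val t2.
  rewrite -[RHS]/(tval (Tuple size_t)) -(map_tnth_enum (Tuple size_t)).
  by apply: eq_map => j; rewrite permE.
exists (perm t_inj); apply/ffunP => e; rewrite fun_graph_half (eqP (xE e)).
by rewrite map_take map_drop t_enum take_size_cat ?drop_size_cat ?size_tuple.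
Qed.

Lemma not_single_cycle_half p : ~~ single_cycle (fun_graph half_succ p).
Proof.
apply/negP => /single_cycleP[q /eqP]; apply/negP.
have [n_gt0 m_lt_n] : 0 < n /\ m < n by split; lia.
apply: (fun_graph_neq_cycle n_gt2 p q (A := [set j : 'I_n | j < m])
  (a := Ordinal n_gt0) (a' := Ordinal m_lt_n)).
- by move=> j; rewrite !inE half_succ_lt.
- by rewrite inE /=; lia.
- by rewrite inE /= ltnn.
Qed.

Lemma m_dvd_n : m %| n.
Proof. by apply/dvdnP; exists 2; lia. Qed.

Lemma ordS_mod j : ordS j = j.+1 %[mod m].
Proof. exact: modn_dvdm m_dvd_n. Qed.

Lemma half_succ_mod j : half_succ j = j.+1 %[mod m].
Proof.
rewrite val_half_succ; case: ifP => _; case: eqP => // ->;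
  by rewrite modnn ?mod0n ?(eqP m_dvd_n).
Qed.

Lemma half_succ_ordS j : ~~ (m %| j.+1) -> half_succ j = ordS j.
Proof.
move=> m_ndvd; apply: val_inj; rewrite val_half_succ /= modn_small; last first.
  rewrite ltn_neqAle ltn_ord andbT; apply: contraNneq m_ndvd => ->; exact: m_dvd_n.
case: ifP => _; case: eqP => // eq_j; case/negP: m_ndvd; rewrite eq_j ?dvdnn //.
exact: m_dvd_n.
Qed.

Local Notation shift i := (rotation n ^+ i)%g.

Lemma shift_mod i j : shift i j = j + i %[mod m].
Proof. by rewrite rotationX; exact: modn_dvdm m_dvd_n. Qed.

Lemma cut_pair i s e :
  fun_graph half_succ (shift i * s)%g e != fun_graph (@ordS n) s e ->
  exists a b, [/\ val e = [set s a; s b], a.+1 = i %[mod m] & b = i %[mod m]].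
Proof.
rewrite -(fun_graph_rotation i s) => /fun_graph_neq[j half_neq e_j].
have m_dvd : m %| j.+1 by apply: contraNT half_neq => /half_succ_ordS ->.
have cut_mod (k : 'I_n) : k = j.+1 %[mod m] -> shift i k = i %[mod m].
  by move=> k_mod; rewrite shift_mod -modnDml k_mod modnDml -modnDml (eqP m_dvd).
exists (shift i j); case/orP: e_j => /eqP ->;
  [exists (shift i (half_succ j)) | exists (shift i (ordS j))];
  rewrite !permM cut_mod ?half_succ_mod ?ordS_mod //;
  by rewrite -addn1 -modnDml shift_mod modnDml addnAC addn1 -modnDml (eqP m_dvd).
Qed.

(* For m = 2 the pair {0, 1} would be cut both at i = 0 and at i = 1. *)
Lemma cut_index_unique (i i' : 'I_m) (a b a' b' : 'I_n) :
  [set a; b] = [set a'; b'] -> a.+1 = i %[mod m] -> b = i %[mod m] ->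
  a'.+1 = i' %[mod m] -> b' = i' %[mod m] -> i = i'.
Proof.
move=> ab_E a_i b_i a'_i' b'_i'.
have eq_mod (x y : 'I_m) : x = y %[mod m] -> x = y.
  by rewrite !modn_small // => /val_inj.
have succ_mod (x y : nat) : x = y %[mod m] -> x.+1 = y.+1 %[mod m].
  by rewrite -(addn1 x) -(addn1 y) -modnDml => ->; rewrite modnDml.
have a_in : a \in [set a'; b'] by rewrite -ab_E set21.
have b_in : b \in [set a'; b'] by rewrite -ab_E set22.
case/set2P: a_in => a_E; first by apply: eq_mod; rewrite -a_i -a'_i' a_E.
case/set2P: b_in => b_E; last by apply: eq_mod; rewrite -b_i -b'_i' b_E.
have i_i' : i = i'.+1 %[mod m] by rewrite -a_i a_E; exact: succ_mod.
have i'_i : i' = i.+1 %[mod m] by rewrite -a'_i' -b_E; exact: succ_mod.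
have /eqP : i + 2 = i + 0 %[mod m].
  by rewrite addn0 addn2 (succ_mod _ _ (esym i'_i)) i_i'.
by rewrite eqn_modDl mod0n modn_small.
Qed.

Lemma card_cut_le1 s e :
  #|[set i : 'I_m | fun_graph half_succ (shift i * s)%g e != fun_graph (@ordS n) s e]|
    <= 1.
Proof.
apply/card_le1_eqP => i i'; rewrite !inE.
move=> /cut_pair[a [b [e_ab a_i b_i]]] /cut_pair[a' [b' [e_ab' a'_i' b'_i']]].
apply/esym/(cut_index_unique _ a_i b_i a'_i' b'_i').
by apply: (imset_inj (@perm_inj _ s)); rewrite !imsetU1 !imset_set1 -e_ab -e_ab'.
Qed.

Lemma single_cycle_in_Delta s : fun_graph (@ordS n) s \in Delta n.
Proof. by rewrite inE single_cycle_fun_graph. Qed.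

Lemma two_cycles_in_Delta s : fun_graph half_succ s \in Delta n.
Proof. by rewrite inE two_cycles_fun_graph orbT. Qed.

Lemma card_accepted_cycles (f : {ffun Graph n -> bool}) :
  #|[set s | f (fun_graph (@ordS n) s)]| * (m - cert_complexity (Delta n) f)
    <= m * #|[set s | f (fun_graph half_succ s)]|.
Proof.
set k := cert_complexity _ _.
have card_shift (i : 'I_m) : #|[set s | f (fun_graph half_succ (shift i * s)%g)]|
    = #|[set s | f (fun_graph half_succ s)]|.
  rewrite -!sum1_card [RHS](reindex_inj (mulgI (shift i))).
  by apply: eq_bigl => s; rewrite !inE.
have -> : m * #|[set s | f (fun_graph half_succ s)]|
    = \sum_(i < m) #|[set s | f (fun_graph half_succ (shift i * s)%g)]|.
  by rewrite (eq_bigr _ (fun i _ => card_shift i)) sum_nat_const card_ord.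
rewrite exchange_sum_card -sum1_card big_distrl big_mkcond /=.
apply: leq_sum => s _; rewrite inE; case: ifP => // accepted; rewrite mul1n.
have [C cert C_le] := cert_complexity_bound f (single_cycle_in_Delta s).
have := cert_fooled (y := fun i : 'I_m => fun_graph half_succ (shift i * s)%g)
  cert (fun i => two_cycles_in_Delta _) (card_cut_le1 s).
rewrite card_ord accepted; under eq_finset do rewrite eqb_id.
by apply: leq_trans; rewrite leq_sub2l.
Qed.

Lemma single_cycles_imset :
  [set x in Delta n | oneVtwoCycle x] = fun_graph (@ordS n) @: setT.
Proof.
apply/setP => x; rewrite !inE /oneVtwoCycle.
apply/andP/imsetP => [[_ /single_cycleP[s ->]]|[s _ ->]]; first by exists s.
by rewrite single_cycle_fun_graph.
Qed.

Lemma two_cycles_imset :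
  [set x in Delta n | ~~ oneVtwoCycle x] = fun_graph half_succ @: setT.
Proof.
apply/setP => x; rewrite !inE /oneVtwoCycle.
apply/andP/imsetP => [[/orP[-> //|/two_cyclesP[s ->]] _]|[s _ ->]]; first by exists s.
by rewrite two_cycles_fun_graph orbT not_single_cycle_half.
Qed.

Local Open Scope ring_scope.

Lemma canon_err_perm (f : {ffun Graph n -> bool}) :
  canon_err (Delta n) (@oneVtwoCycle n) f
  = (#|[set s | ~~ f (fun_graph (@ordS n) s)]|%:R
     + #|[set s | f (fun_graph half_succ s)]|%:R) / (2 * #|{perm 'I_n}|)%:R.
Proof.
have restrict (P Q : pred (Graph n)) :
    [set x in Delta n | P x && Q x] = [set x in [set x in Delta n | P x] | Q x].
  by apply/setP => x; rewrite !inE andbA.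
rewrite /canon_err !restrict single_cycles_imset two_cycles_imset.
rewrite !(imset_card_ratio (@fun_graph_mulr_compat _ _)) -mulrDr -mulrDl.
by rewrite natrM invfM mul1r mulrCA.
Qed.

Lemma feasible_cert_complexity_lb (f : {ffun Graph n -> bool}) :
  canon_err (Delta n) (@oneVtwoCycle n) f <= 1 / 6 ->
  (n <= 4 * cert_complexity (Delta n) f)%N.
Proof.
rewrite canon_err_perm => err_le; rewrite leqNgt; apply/negP => k_small.
have := card_accepted_cycles f.
set k := cert_complexity _ _ in k_small *.
set NA := #|[set s | ~~ f _]| in err_le *; set NB := #|[set s | f _]| in err_le *.
set N := #|{perm 'I_n}| in err_le.
have N_gt0 : (0 < N)%N by apply/card_gt0P; exists 1%g.
have accepted : #|[set s | f (fun_graph (@ordS n) s)]| = (N - NA)%N.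
  have rejected : #|~: [set s | f (fun_graph (@ordS n) s)]| = NA.
    by apply: eq_card => s; rewrite !inE.
  by rewrite /N -(cardsC [set s | f (fun_graph (@ordS n) s)]) rejected addnK.
have err3 : (3 * (NA + NB) <= N)%N.
  rewrite -(ler_nat rat) natrM natrD.
  move: err_le; rewrite ler_pdivrMr ?ltr0n ?muln_gt0 // natrM; lra.
(* (N - NA) (m - k) <= m NB with 2 k < m forces N - NA < 2 NB. *)
rewrite accepted; move: err3 k_small N_gt0; nia.
Qed.
End Halves.

Local Open Scope ring_scope.

Theorem corollary5p12 (n : nat) (hev : ~~ odd n) (hn : (6 <= n)%N) :
  (n%:R / 4 : rat) <= (approx_cert (Delta n) (@oneVtwoCycle n) (1 / 6))%:R.
Proof.
have n_double : n = (n./2 + n./2)%N.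
  by rewrite addnn -{1}(odd_double_half n) (negbTE hev).
have m_gt2 : (2 < n./2)%N by lia.
rewrite ler_pdivrMr // -natrM ler_nat mulnC.
apply: (big_ind (fun v => n <= 4 * v)%N) => [|a b|f].
- by rewrite card_sig -cardsE card_draws card_ord bin2 -divn2; nia.
- lia.
- exact: feasible_cert_complexity_lb.
Qed.
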